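(* For every $w\in\mathfrak S(n)$, $$g_w\in T_w+\sum_{w'\in\mathfrak S(n),\ w'<w}R[t_1,\ldots,t_n]\,T_{w'},$$ where $<$ is the (strict) Bruhat order on $\mathfrak S(n)$.
   Context: Standing setup: $R$ is an integral domain, $n\ge 2$, $r\ge 1$, and $q,u_1,\ldots,u_r\in R$ with $q$ invertible in $R$ and $\Delta:=\prod_{1\le j<i\le r}(u_i-u_j)$ invertible in $R$. For $1\le c\le r$ let $F_c(X)\in R[X]$ be the unique polynomial of degree $\le r-1$ with $F_c(u_{c'})=\delta_{c,c'}\Delta$ for all $1\le c'\le r$. The modified Ariki–Koike (Shoji) algebra $\mathcal H_{n,r}=\mathcal H_{n,r}(R,q,u_1,\ldots,u_r)$ is the associative $R$-algebra generated by $t_1,\ldots,t_n,T_1,\ldots,T_{n-1}$ subject to: $(T_i-q)(T_i+q^{-1})=0$; $(t_i-u_1)\cdots(t_i-u_r)=0$; $T_iT_{i+1}T_i=T_{i+1}T_iT_{i+1}$; $T_iT_j=T_jT_i$ for $|i-j|\ge2$; $t_it_j=t_jt_i$; $T_jt_k=t_kT_j$ for $k\ne j,j+1$; and for $2\le j\le n$: $T_{j-1}t_j=t_{j-1}T_{j-1}+\Delta^{-2}\sum_{1\le c_1<c_2\le r}(u_{c_2}-u_{c_1})(q-q^{-1})F_{c_1}(t_{j-1})F_{c_2}(t_j)$ and $T_{j-1}t_{j-1}=t_jT_{j-1}-\Delta^{-2}\sum_{1\le c_1<c_2\le r}(u_{c_2}-u_{c_1})(q-q^{-1})F_{c_1}(t_{j-1})F_{c_2}(t_j)$.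 Write $[1,r]=\{1,\ldots,r\}$; for $\mathbf k=(k_1,\ldots,k_n)\in[1,r]^n$ set $b_{\mathbf k}:=\prod_{i=1}^n\prod_{1\le j\le r,\,j\ne k_i}\frac{t_i-u_j}{u_{k_i}-u_j}$. For $1\le i,j\le n$ let $B'_{i,j}:=-(q-q^{-1})\sum_{\mathbf k,\ k_i<k_j}b_{\mathbf k}$, and for $1\le i\le n-1$ let $g_i:=T_i+B'_{i,i+1}$. For $w\in\mathfrak S(n)$ with reduced expression $w=s_{i_1}\cdots s_{i_l}$ ($s_i=(i\ i+1)$), set $T_w:=T_{i_1}\cdots T_{i_l}$ and $g_w:=g_{i_1}\cdots g_{i_l}$; both are independent of the reduced expression since the $T_i$ and the $g_i$ satisfy the braid relations. $R[t_1,\ldots,t_n]$ is the subalgebra generated by $t_1,\ldots,t_n$. *)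

From HB Require Import structures.
From mathcomp Require Import all_boot all_order all_algebra all_fingroup.
From Stdlib Require Import Relations.
Set Implicit Arguments. Unset Strict Implicit. Unset Printing Implicit Defensive.
Import Order.TTheory GRing.Theory Num.Theory.
Local Open Scope ring_scope.

(* Convention: n = m.+1 (so n >= 2 iff 1 <= m). Indices are 0-based:
   t i (i : 'I_m.+1) is t_{i+1}; T k (k : 'I_m) is T_{k+1}, which acts on
   positions k and k+1. *)

Definition ord_lo m (k : 'I_m) : 'I_m.+1 := widen_ord (leqnSn m) k.
Definition ord_hi m (k : 'I_m) : 'I_m.+1 := lift ord0 k.
Definition sw m (k : 'I_m) : 'S_m.+1 := tperm (ord_lo k) (ord_hi k).

Definition wordperm m (s : seq 'I_m) : 'S_m.+1 := (\prod_(k <- s) sw k)%g.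

Definition coxlen m (w : 'S_m.+1) (k : nat) : Prop :=
  (exists s : seq 'I_m, size s = k /\ wordperm s = w) /\
  (forall s : seq 'I_m, wordperm s = w -> (k <= size s)%N).

Definition reduced m (s : seq 'I_m) : Prop :=
  forall s' : seq 'I_m, wordperm s' = wordperm s -> (size s <= size s')%N.

Definition bruhat_step m (u v : 'S_m.+1) : Prop :=
  exists a b : 'I_m.+1, a != b /\ v = (u * tperm a b)%g /\
    exists k1 k2, coxlen u k1 /\ coxlen v k2 /\ (k1 < k2)%N.
Definition bruhat_lt m : relation 'S_m.+1 := clos_trans _ (@bruhat_step m).

Section Hecke.
Variables (R : idomainType) (m r : nat) (q : R) (u : 'I_r -> R).
Variables (F : 'I_r -> {poly R}) (A : algType R).
Variables (t : 'I_m.+1 -> A) (T : 'I_m -> A).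

Definition Delta : R := \prod_(j < r) \prod_(i < r | (j < i)%N) (u i - u j).

(** The correction term in the last two defining relations, for the pair
    of positions (a, b) = (j-1, j). *)
Definition Xcorr (a b : 'I_m.+1) : A :=
  (Delta ^- 2) *: \sum_(c1 < r) \sum_(c2 < r | (c1 < c2)%N)
     ((u c2 - u c1) * (q - q^-1)) *: (horner_alg (t a) (F c1) * horner_alg (t b) (F c2)).

Definition bk (k : {ffun 'I_m.+1 -> 'I_r}) : A :=
  \prod_(i < m.+1) \prod_(j < r | j != k i) ((u (k i) - u j)^-1 *: (t i - (u j)%:A)).

Definition Bp (i j : 'I_m.+1) : A :=
  - (q - q^-1) *: \sum_(k : {ffun 'I_m.+1 -> 'I_r} | (k i < k j)%N) bk k.

Definition g (k : 'I_m) : A := T k + Bp (ord_lo k) (ord_hi k).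

Definition prodT (s : seq 'I_m) : A := \prod_(k <- s) T k.
Definition prodg (s : seq 'I_m) : A := \prod_(k <- s) g k.

Inductive in_Rt : A -> Prop :=
| Rt_scal (c : R) : in_Rt (c%:A)
| Rt_gen (i : 'I_m.+1) : in_Rt (t i)
| Rt_add x y : in_Rt x -> in_Rt y -> in_Rt (x + y)
| Rt_mul x y : in_Rt x -> in_Rt y -> in_Rt (x * y).

Definition Hnr_relations : Prop :=
  (forall k, (T k - q%:A) * (T k + (q^-1)%:A) = 0) /\
      (forall i, \prod_(c < r) (t i - (u c)%:A) = 0) /\
      (forall k l : 'I_m, val l = (val k).+1 -> T k * T l * T k = T l * T k * T l) /\
      (forall k l : 'I_m, (val k + 2 <= val l)%N \/ (val l + 2 <= val k)%N ->
          T k * T l = T l * T k) /\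
      (forall i j, t i * t j = t j * t i) /\
      (forall (k : 'I_m) (i : 'I_m.+1), i != ord_lo k -> i != ord_hi k ->
          T k * t i = t i * T k) /\
      (forall k : 'I_m,
          T k * t (ord_hi k) = t (ord_lo k) * T k + Xcorr (ord_lo k) (ord_hi k) /\
          T k * t (ord_lo k) = t (ord_hi k) * T k - Xcorr (ord_lo k) (ord_hi k)).

End Hecke.

From HB Require Import structures.
From mathcomp Require Import all_boot all_order all_algebra all_fingroup.
From mathcomp Require Import zify.
From Stdlib Require Import Relations.
Set Implicit Arguments. Unset Strict Implicit. Unset Printing Implicit Defensive.

(* Expanding [g_s = prod (T_i + B'_i)] along a reduced word [s], with [B'_i]
   in R[t], and moving coefficients to the left with [T_i f = f' T_i + d]
   ([f, f', d] in R[t]) leaves [T_s] plus R[t]-multiples of [T_v] for proper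
   subwords [v] of [s].  Each such [T_v] is an R[t]-combination of [T_u] with
   [u] reduced, no longer than [v] and Bruhat-below the permutation [w] of [s]:
   append the letters of [v] one at a time, using the exchange property and
   the quadratic relation at a descent, and Deodhar's lifting property to stay
   below [w].  Being strictly shorter than [s], these [u] are strictly below
   [w].  Coxeter lengths are computed as inversion numbers. *)

Section PermLength.
Local Open Scope group_scope.
Variable N : nat.
Implicit Types (w : 'S_N) (a b c : 'I_N).

Definition ninv (s : 'S_N) : nat :=
  \sum_(p : 'I_N * 'I_N) ((p.1 < p.2) && (s p.2 < s p.1)).

(* [w * tperm a b] is [w] followed by the swap of the values [a] and [b], so
   the length of [w] is counted by the inversions of [w^-1]. *)
Definition plen w : nat := ninv w^-1.

Lemma eq_ord a b : (a == b) = (a == b :> nat).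
Proof. by []. Qed.

Lemma plen1 : plen 1 = 0.
Proof.
rewrite /plen invg1 /ninv big1 // => p _.
by rewrite !perm1; case: ltngtP.
Qed.

Lemma val_tperm a b c :
  tperm a b c = (if c == a then b else if c == b then a else c) :> nat.
Proof.
case: tpermP => [->|->|/eqP/negbTE-> /eqP/negbTE->]; rewrite ?eqxx //.
by case: eqP => [->|].
Qed.

Lemma ltn_tperm_adj a b c c' : b = a.+1 :> nat ->
  (c, c') != (a, b) -> (c, c') != (b, a) ->
  (tperm a b c < tperm a b c') = (c < c').
Proof.
move=> ab; rewrite !xpair_eqE !val_tperm !eq_ord; move: ab.
by case: eqP; case: eqP; case: eqP; case: eqP => /=; lia.
Qed.

Lemma plen_mul_adj w a b : b = a.+1 :> nat ->
  w^-1 a < w^-1 b -> plen (w * tperm a b) = (plen w).+1.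
Proof.
move=> ab lt_ab; rewrite /plen invMg tpermV /ninv.
have tperm2_inj : injective (fun p : 'I_N * 'I_N => (tperm a b p.1, tperm a b p.2)).
  by move=> [? ?] [? ?] /= [/perm_inj -> /perm_inj ->].
rewrite (reindex_inj tperm2_inj) /=.
have nba : (b, a) != (a, b) by rewrite xpair_eqE eq_ord ab; lia.
rewrite (bigD1 (a, b)) //= (bigD1 (b, a)) //=.
rewrite [in RHS](bigD1 (a, b)) //= [in RHS](bigD1 (b, a)) //=.
rewrite !permM !tpermK tpermL tpermR.
have [-> ->] : (b < a) = false /\ (a < b) = true by split; lia.
rewrite lt_ab ltnNge (ltnW lt_ab) add0n add1n; congr _.+1.
apply: eq_bigr => -[c c'] /andP[ne1 ne2] /=.
by rewrite !permM !tpermK ltn_tperm_adj.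
Qed.

Lemma plen_mul_adj_desc w a b : b = a.+1 :> nat ->
  w^-1 b < w^-1 a -> (plen (w * tperm a b)).+1 = plen w.
Proof.
move=> ab lt_ba; rewrite -{2}[w]mulg1 -(tperm2 a b) mulgA.
by rewrite (plen_mul_adj (w := w * tperm a b)) // invMg tpermV !permM tpermL tpermR.
Qed.

Lemma tperm_conj a b c : a != b -> c != b ->
  tperm a b = tperm a c * tperm c b * tperm a c.
Proof.
move=> nab ncb; have := tpermJ c b (tperm a c).
by rewrite /conjg tpermV tpermR (tpermD nab ncb) mulgA => ->.
Qed.

Lemma invMtperm w a b c : (w * tperm a b)^-1 c = w^-1 (tperm a b c).
Proof. by rewrite invMg tpermV permM. Qed.

(* Induction on [b - a], writing [tperm a b] as a conjugate of [tperm c b]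
   with [c = a + 1]. *)
Lemma plen_mul_tperm w a b : a < b ->
  w^-1 a < w^-1 b -> plen w < plen (w * tperm a b).
Proof.
move=> lt_ab; move: {2}(b - a.+1) (erefl (b - a.+1)) => d.
elim: d w a b lt_ab => [|d IH] w a b lt_ab db lt_wab.
  by rewrite plen_mul_adj //; lia.
have ltc : a.+1 < N by have := ltn_ord b; lia.
set c := Ordinal ltc.
have [nab ncb nca nba] : [/\ a != b, c != b, c != a & b != a].
  by rewrite !eq_ord /=; split; lia.
have winj x y : w^-1 x = w^-1 y :> nat -> x = y by move/val_inj/perm_inj.
have lt_c : plen (w * tperm a c) < plen (w * tperm a c * tperm c b).
  by apply: IH => /=; [lia|lia|rewrite !invMtperm tpermR (tpermD nab ncb)].
have -> : w * tperm a b = w * tperm a c * tperm c b * tperm a c.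
  by rewrite (tperm_conj nab ncb) !mulgA.
have e2 x : (w * tperm a c * tperm c b)^-1 x = w^-1 (tperm a c (tperm c b x)).
  by rewrite !invMtperm.
have e2a : (w * tperm a c * tperm c b)^-1 a = w^-1 c.
  by rewrite e2 (tpermD nca nba) tpermL.
have e2c : (w * tperm a c * tperm c b)^-1 c = w^-1 b.
  by rewrite e2 tpermL (tpermD nab ncb).
have ac : c = a.+1 :> nat by [].
case: (ltngtP (w^-1 c) (w^-1 a)) => [lt_ca|lt_ac|/winj/eqP]; last by rewrite (negbTE nca).
- have := plen_mul_adj_desc ac lt_ca.
  have := @plen_mul_adj (w * tperm a c * tperm c b) a c ac.
  by rewrite e2a e2c => /(_ (ltn_trans lt_ca lt_wab)); lia.
- have := plen_mul_adj ac lt_ac.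
  case: (ltngtP (w^-1 c) (w^-1 b)) => [lt_cb|lt_bc|/winj/eqP]; last by rewrite (negbTE ncb).
  + have := @plen_mul_adj (w * tperm a c * tperm c b) a c ac.
    by rewrite e2a e2c => /(_ lt_cb); lia.
  + have := @plen_mul_adj_desc (w * tperm a c * tperm c b) a c ac.
    by rewrite e2a e2c => /(_ lt_bc); lia.
Qed.

Lemma plen_mul_tpermE w a b : a < b ->
  (plen w < plen (w * tperm a b)) = (w^-1 a < w^-1 b).
Proof.
move=> lt_ab; apply/idP/idP => [lt_len|]; last exact: plen_mul_tperm.
case: (ltngtP (w^-1 a) (w^-1 b)) => // [lt_ba|/val_inj/perm_inj eq_ab]; last first.
  by move: lt_ab; rewrite eq_ab ltnn.
have := @plen_mul_tperm (w * tperm a b) a b lt_ab.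
by rewrite !invMtperm tpermL tpermR -mulgA tperm2 mulg1 => /(_ lt_ba); lia.
Qed.

Lemma plen_mul_tperm3 w a b c : a < c -> c < b ->
  w^-1 a < w^-1 c -> w^-1 c < w^-1 b -> plen w + 3 <= plen (w * tperm a b).
Proof.
move=> lt_ac lt_cb lt1 lt2.
have [nab ncb nca nba] : [/\ a != b, c != b, c != a & b != a].
  by rewrite !eq_ord; split; lia.
have -> : w * tperm a b = w * tperm a c * tperm c b * tperm a c.
  by rewrite (tperm_conj nab ncb) !mulgA.
have H1 : plen w < plen (w * tperm a c) by apply: plen_mul_tperm.
have H2 : plen (w * tperm a c) < plen (w * tperm a c * tperm c b).
  apply: plen_mul_tperm => //.
  by rewrite !invMtperm tpermR (tpermD nab ncb); apply: ltn_trans lt2.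
have H3 : plen (w * tperm a c * tperm c b) < plen (w * tperm a c * tperm c b * tperm a c).
  apply: plen_mul_tperm => //.
  by rewrite !invMtperm (tpermD nca nba) !tpermL (tpermD nab ncb).
lia.
Qed.

Lemma ord_increasing_id (f : 'I_N -> 'I_N) :
  (forall a b, b = a.+1 :> nat -> f a < f b) -> forall a, f a = a.
Proof.
move=> f_incr.
have lower k a : a = k :> nat -> k <= f a.
  elim: k a => [//|k IH] a ak.
  have ltk : k < N by have := ltn_ord a; lia.
  by have := IH (Ordinal ltk) erefl; have := f_incr (Ordinal ltk) a ak; rewrite /=; lia.
have upper d a : a + d = N.-1 -> f a + d <= N.-1.
  elim: d a => [|d IH] a ad; first by have := ltn_ord (f a); lia.
  have lta : a.+1 < N by have := ltn_ord a; lia.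
  have := IH (Ordinal lta) (ltac:(rewrite /=; lia)).
  by have := f_incr a (Ordinal lta) erefl; rewrite /=; lia.
move=> a; apply: val_inj => /=.
by have := lower a a erefl; have := upper (N.-1 - a) a (ltac:(have := ltn_ord a; lia)); lia.
Qed.

End PermLength.

Section Descents.
Variable m : nat.
Local Notation N := m.+1.
Local Open Scope group_scope.
Implicit Types (w : 'S_N) (k a : 'I_m) (s : seq 'I_m).

Lemma ord_lo_val k : ord_lo k = k :> nat.
Proof. by []. Qed.

Lemma ord_hi_val k : ord_hi k = k.+1 :> nat.
Proof. by []. Qed.

Lemma ord_lo_hi_neq k : ord_lo k != ord_hi k.
Proof. by rewrite eq_ord ord_lo_val ord_hi_val; lia. Qed.

Definition descent w k : bool := w^-1 (ord_hi k) < w^-1 (ord_lo k).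

Lemma ascentE w k : ~~ descent w k = (w^-1 (ord_lo k) < w^-1 (ord_hi k)).
Proof.
rewrite /descent -leqNgt leq_eqVlt orb_idl // => /eqP/val_inj/perm_inj eq_lohi.
by have := ord_lo_hi_neq k; rewrite eq_lohi eqxx.
Qed.

Lemma descent1 k : ~~ descent 1 k.
Proof. by rewrite /descent invg1 !perm1 ord_hi_val -leqNgt. Qed.

Lemma invMsw w k x : (w * sw k)^-1 x = w^-1 (sw k x).
Proof. exact: invMtperm. Qed.

Lemma descent_mulsw w k : descent (w * sw k) k = ~~ descent w k.
Proof. by rewrite ascentE /descent !invMsw /sw tpermL tpermR. Qed.

Lemma plen_mulsw_asc w k : ~~ descent w k -> plen (w * sw k) = (plen w).+1.
Proof. by rewrite ascentE; apply: plen_mul_adj; rewrite ord_hi_val. Qed.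

Lemma plen_mulsw_desc w k : descent w k -> (plen (w * sw k)).+1 = plen w.
Proof. by apply: plen_mul_adj_desc; rewrite ord_hi_val. Qed.

Lemma mulswK w k : w * sw k * sw k = w.
Proof. by rewrite -mulgA tperm2 mulg1. Qed.

Lemma wordperm_nil : wordperm [::] = 1 :> 'S_N.
Proof. by rewrite /wordperm big_nil. Qed.

Lemma wordperm_rcons s k : wordperm (rcons s k) = wordperm s * sw k.
Proof. by rewrite /wordperm big_rcons. Qed.

Lemma plen_wordperm s : plen (wordperm s) <= size s.
Proof.
elim/last_ind: s => [|s k IH]; first by rewrite wordperm_nil plen1.
rewrite wordperm_rcons size_rcons; case: (boolP (descent (wordperm s) k)).
  by move/plen_mulsw_desc; lia.
by move/plen_mulsw_asc ->.
Qed.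

Lemma no_descent_perm1 w : (forall k, ~~ descent w k) -> w = 1.
Proof.
move=> asc; suff winv1 : w^-1 = 1 by rewrite -[w]invgK winv1 invg1.
apply/permP => x; rewrite perm1; apply: ord_increasing_id => c c' cc'.
have ltc : c < m by have := ltn_ord c'; lia.
have -> : c = ord_lo (Ordinal ltc) by exact: val_inj.
have -> : c' = ord_hi (Ordinal ltc) by apply/eqP; rewrite eq_ord ord_hi_val cc'.
by rewrite -ascentE.
Qed.

Lemma coxlen_plen w : coxlen w (plen w).
Proof.
split; last by move=> s <-; exact: plen_wordperm.
elim: {w}(plen w).+1 {-2}w (ltnSn (plen w)) => // n IH w lt_wn.
case: (pickP (descent w)) => [k desc_wk|asc]; last first.
  rewrite (no_descent_perm1 (fun k => negbT (asc k))).
  by exists [::]; rewrite wordperm_nil plen1.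
have len_wk := plen_mulsw_desc desc_wk.
have [s [size_s wordperm_s]] := IH (w * sw k) (ltac:(lia)).
by exists (rcons s k); rewrite size_rcons wordperm_rcons size_s wordperm_s mulswK len_wk.
Qed.

Lemma coxlen_plenE w n : coxlen w n -> n = plen w.
Proof.
move=> [[s [<- <-]] min_s]; have [[s' [<- ws']] min_s'] := coxlen_plen (wordperm s).
by have := min_s s' ws'; have := min_s' s erefl; lia.
Qed.

Lemma reducedP s : reduced s <-> plen (wordperm s) = size s.
Proof.
split=> [red_s|len_s s' ws']; last by rewrite -len_s -ws' plen_wordperm.
have [[s' [size_s' ws']] _] := coxlen_plen (wordperm s).
by have := red_s s' ws'; have := plen_wordperm s; lia.
Qed.

Lemma reduced_rconsE s k :
  reduced (rcons s k) <-> reduced s /\ ~~ descent (wordperm s) k.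
Proof.
rewrite !reducedP wordperm_rcons size_rcons; have := plen_wordperm s.
case: (boolP (descent _ k)) => [/plen_mulsw_desc|/plen_mulsw_asc ->]; first lia.
by split=> [[]|[->]].
Qed.

Lemma reduced_size s s' : reduced s -> reduced s' ->
  wordperm s = wordperm s' -> size s = size s'.
Proof. by move=> /reducedP <- /reducedP <- ->. Qed.

Lemma sw_comm k a : k + 2 <= a \/ a + 2 <= k -> sw k * sw a = sw a * sw k.
Proof.
move=> far.
have [n1 n2 n3 n4] : [/\ ord_lo k != ord_lo a, ord_hi k != ord_lo a,
                         ord_lo k != ord_hi a & ord_hi k != ord_hi a].
  by rewrite !eq_ord !ord_lo_val !ord_hi_val; split; lia.
have := tpermJ (ord_lo a) (ord_hi a) (sw k).
rewrite /conjg /sw tpermV (tpermD n1 n2) (tpermD n3 n4) -/(sw a) => swJ.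
by rewrite -{1}swJ !mulgA tperm2 mul1g.
Qed.

Lemma sw_braid k a : a = k.+1 :> nat -> sw k * sw a * sw k = sw a * sw k * sw a.
Proof.
move=> ak.
have hilo : ord_hi k = ord_lo a by apply/eqP; rewrite eq_ord ord_lo_val ord_hi_val ak.
have [n1 n2 n3 n4] : [/\ ord_lo a != ord_lo k, ord_hi a != ord_lo k,
                         ord_lo k != ord_hi a & ord_hi k != ord_hi a].
  by rewrite !eq_ord !ord_lo_val !ord_hi_val; split; lia.
have E1 : sw k * sw a * sw k = sw a ^ sw k by rewrite /conjg /sw tpermV mulgA.
have E2 : sw a * sw k * sw a = sw k ^ sw a by rewrite /conjg /sw tpermV mulgA.
by rewrite E1 E2 /sw !tpermJ -hilo tpermR (tpermD n3 n4) hilo tpermL (tpermD n1 n2).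
Qed.

Lemma descent_far w k a : k + 2 <= a \/ a + 2 <= k ->
  descent (w * sw a) k = descent w k.
Proof.
move=> far; rewrite /descent !invMsw.
have [n1 n2 n3 n4] : [/\ ord_lo a != ord_lo k, ord_hi a != ord_lo k,
                         ord_lo a != ord_hi k & ord_hi a != ord_hi k].
  by rewrite !eq_ord !ord_lo_val !ord_hi_val; split; lia.
by rewrite /sw (tpermD n1 n2) (tpermD n3 n4).
Qed.

Lemma descent_braid w k a : a = k.+1 :> nat \/ k = a.+1 :> nat ->
  descent w k -> descent w a -> descent (w * sw a) k /\ descent (w * sw a * sw k) a.
Proof.
move=> adj; rewrite /descent !invMsw /sw.
have [n1 n2] : ord_lo k != ord_lo a /\ ord_lo a != ord_lo k.
  by rewrite !eq_ord !ord_lo_val; split; lia.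
case: adj => adj.
  have [n3 n4] : ord_hi a != ord_lo k /\ ord_lo k != ord_hi a.
    by rewrite !eq_ord !ord_lo_val !ord_hi_val; split; lia.
  have -> : ord_hi k = ord_lo a by apply/eqP; rewrite eq_ord ord_lo_val ord_hi_val adj.
  rewrite tpermL (tpermD n2 n3) => desc_k desc_a.
  split; first exact: ltn_trans desc_a desc_k.
  by rewrite (tpermD n4 (ord_lo_hi_neq a)) !tpermR (tpermD n2 n3).
have [n3 n4] : ord_lo a != ord_hi k /\ ord_hi k != ord_lo a.
  by rewrite !eq_ord !ord_lo_val !ord_hi_val; split; lia.
have -> : ord_hi a = ord_lo k by apply/eqP; rewrite eq_ord ord_lo_val ord_hi_val adj.
rewrite (tpermD n3 (ord_lo_hi_neq k)) tpermR => desc_k desc_a.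
split; first exact: ltn_trans desc_k desc_a.
by rewrite tpermL (tpermD n3 (ord_lo_hi_neq k)) (tpermD n1 n4) tpermL.
Qed.

End Descents.

Section Bruhat.
Variable m : nat.
Local Notation N := m.+1.
Local Open Scope group_scope.
Implicit Types (x y w : 'S_N) (k : 'I_m) (a b c : 'I_N).

Definition bruhat_le x y := x = y \/ bruhat_lt x y.

Lemma bruhat_le_trans y x w : bruhat_le x y -> bruhat_le y w -> bruhat_le x w.
Proof.
move=> [-> //|lt_xy] [<-|lt_yw]; right => //.
exact: t_trans lt_xy lt_yw.
Qed.

Lemma bruhat_step_tperm x a b : a != b -> plen x < plen (x * tperm a b) ->
  bruhat_step x (x * tperm a b).
Proof.
move=> nab lt_len; exists a, b; do 2!split => //.
by exists (plen x), (plen (x * tperm a b)); split; [|split]; try exact: coxlen_plen.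
Qed.

Lemma bruhat_stepP x y : bruhat_step x y ->
  exists a b, [/\ a < b, y = x * tperm a b & plen x < plen y].
Proof.
move=> [a [b [nab [-> [n1 [n2 [/coxlen_plenE -> [/coxlen_plenE -> lt_len]]]]]]]].
case: (ltngtP a b) => [lt_ab|lt_ba|/val_inj eq_ab]; first by exists a, b.
  by exists b, a; split => //; rewrite tpermC.
by move: nab; rewrite eq_ab eqxx.
Qed.

Lemma bruhat_le_mulsw_asc w k : ~~ descent w k -> bruhat_le w (w * sw k).
Proof.
move=> asc; right; apply: t_step; apply: bruhat_step_tperm; first exact: ord_lo_hi_neq.
by rewrite -/(sw k) plen_mulsw_asc.
Qed.

Lemma bruhat_le_mulsw_desc w k : descent w k -> bruhat_le (w * sw k) w.
Proof.
move=> desc_wk; have := @bruhat_le_mulsw_asc (w * sw k) k.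
by rewrite descent_mulsw desc_wk mulswK; apply.
Qed.

Lemma mul_tperm_sw x a b k : x * tperm a b * sw k = x * sw k * tperm (sw k a) (sw k b).
Proof. by rewrite -tpermJ /conjg /sw tpermV !mulgA mulswK. Qed.

Lemma tperm_new_descent (P : 'S_N) a b k : a < b -> P a < P b ->
  P (ord_lo k) < P (ord_hi k) -> P (tperm a b (ord_hi k)) < P (tperm a b (ord_lo k)) ->
  tperm a b = sw k \/ exists c, [/\ a < c, c < b, P a < P c & P c < P b].
Proof.
move=> lt_ab lt_Pab; rewrite /sw; set l := ord_lo k; set h := ord_hi k => lt_Plh.
have hl : h = l.+1 :> nat by rewrite /h ord_hi_val.
have [nlh nhl] : l != h /\ h != l by rewrite !eq_ord hl; split; lia.
case: (eqVneq a l) => [al|nal]; case: (eqVneq b h) => [bh|nbh].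
- by left; rewrite al bh.
- rewrite al tpermL (tpermD nlh nbh) => lt_Phb; right; exists h.
  by move: lt_ab nbh lt_Pab; rewrite al eq_ord; split => //; lia.
- rewrite bh tpermR (tpermD nal nhl) => lt_Pal; right; exists l.
  by move: lt_ab nal lt_Pab; rewrite bh eq_ord; split => //; lia.
case: (eqVneq b l) => [bl|nbl].
  have nah : a != h by move: lt_ab; rewrite eq_ord bl hl; lia.
  rewrite bl tpermR (tpermD nah nlh) => lt_Pha; exfalso.
  by move: lt_Pab; rewrite bl; lia.
case: (eqVneq a h) => [ah|nah].
  rewrite ah tpermL (tpermD nhl nbl) => lt_Pbl; exfalso.
  by move: lt_Pab; rewrite ah; lia.
by rewrite (tpermD nah nbh) (tpermD nal nbl) => lt_Phl; exfalso; lia.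
Qed.

Definition max_sw x k := if descent x k then x else x * sw k.

(* Deodhar's lifting property (property Z), for one Bruhat step. *)
Lemma bruhat_step_max_sw x y k : bruhat_step x y -> bruhat_le (max_sw x k) (max_sw y k).
Proof.
case/bruhat_stepP => a [b [lt_ab -> lt_len]].
have nab : a != b by rewrite eq_ord; lia.
have step_sw : plen (x * sw k) < plen (x * tperm a b * sw k) ->
    bruhat_le (x * sw k) (x * tperm a b * sw k).
  move=> lt_len_sw; right; apply: t_step; rewrite mul_tperm_sw in lt_len_sw *.
  by apply: bruhat_step_tperm => //; rewrite (inj_eq perm_inj).
have le_step : bruhat_le x (x * tperm a b) by right; apply/t_step/bruhat_step_tperm.
rewrite /max_sw; case: (boolP (descent x k)) => dx; case: (boolP (descent _ k)) => dy.
- exact: le_step.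
- exact: bruhat_le_trans le_step (bruhat_le_mulsw_asc dy).
- have lt_Pab : x^-1 a < x^-1 b by rewrite -plen_mul_tpermE.
  move: (dx) (dy); rewrite ascentE /descent !invMtperm => lt_Plh lt_Pthl.
  have [->|[c [lt_ac lt_cb lt_Pac lt_Pcb]]] :=
    tperm_new_descent lt_ab lt_Pab lt_Plh lt_Pthl; first by left.
  apply: bruhat_le_trans (bruhat_le_mulsw_desc dy); apply: step_sw.
  have := plen_mul_tperm3 lt_ac lt_cb lt_Pac lt_Pcb.
  by have := plen_mulsw_asc dx; have := plen_mulsw_desc dy; lia.
- by apply: step_sw; rewrite !plen_mulsw_asc.
Qed.

Lemma bruhat_le_max_sw x y k : bruhat_le x y -> bruhat_le (max_sw x k) (max_sw y k).
Proof.
case=> [-> |]; first by left.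
elim=> [{}x {}y /bruhat_step_max_sw //|x' y' z' _ IH1 _ IH2].
exact: bruhat_le_trans IH1 IH2.
Qed.

Lemma bruhat_le_mulsw w p k : bruhat_le w p -> ~~ descent p k ->
  bruhat_le (w * sw k) (p * sw k).
Proof.
move=> le_wp asc_p; have := bruhat_le_max_sw k le_wp.
rewrite /max_sw (negbTE asc_p); case: ifP => // desc_w.
by apply: bruhat_le_trans; apply: bruhat_le_mulsw_desc; rewrite desc_w.
Qed.

End Bruhat.

Import GRing.Theory.
Local Open Scope ring_scope.

Section TSpan.
Variables (R : idomainType) (m : nat) (A : algType R).
Variables (t : 'I_m.+1 -> A) (T : 'I_m -> A).
Local Notation Rt := (in_Rt t).
Implicit Types (S : seq 'I_m -> Prop) (f x y : A) (w : seq 'I_m).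

Lemma in_Rt0 : Rt 0. Proof. by have := Rt_scal t 0; rewrite scale0r. Qed.
Lemma in_Rt1 : Rt 1. Proof. by have := Rt_scal t 1; rewrite scale1r. Qed.

Lemma in_RtZ c x : Rt x -> Rt (c *: x).
Proof. by rewrite -mulr_algl; apply: Rt_mul; apply: Rt_scal. Qed.

Lemma in_RtB x y : Rt x -> Rt y -> Rt (x - y).
Proof. by move=> Rx Ry; apply: Rt_add; rewrite // -scaleN1r; apply: in_RtZ. Qed.

Lemma in_Rt_sum (I : Type) (r : seq I) (P : pred I) (G : I -> A) :
  (forall i, P i -> Rt (G i)) -> Rt (\sum_(i <- r | P i) G i).
Proof. by move=> RG; elim/big_rec: _ => [|i x /RG]; [exact: in_Rt0|apply: Rt_add]. Qed.

Lemma in_Rt_prod (I : Type) (r : seq I) (P : pred I) (G : I -> A) :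
  (forall i, P i -> Rt (G i)) -> Rt (\prod_(i <- r | P i) G i).
Proof. by move=> RG; elim/big_rec: _ => [|i x /RG]; [exact: in_Rt1|apply: Rt_mul]. Qed.

Lemma in_Rt_horner x p : Rt x -> Rt (horner_alg x p).
Proof.
move=> Rx; elim/poly_ind: p => [|p c IH]; first by rewrite rmorph0; exact: in_Rt0.
rewrite rmorphD rmorphM /= horner_algX horner_algC.
by apply: Rt_add; [apply: Rt_mul | apply: Rt_scal].
Qed.

Definition Tspan S x : Prop := exists l : seq (A * seq 'I_m),
  (forall p, p \in l -> Rt p.1 /\ S p.2) /\ x = \sum_(p <- l) p.1 * prodT T p.2.

Lemma Tspan_term S f w : Rt f -> S w -> Tspan S (f * prodT T w).
Proof.
by move=> Rf Sw; exists [:: (f, w)]; rewrite big_seq1; split=> // p /[1!inE] /eqP ->.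
Qed.

Lemma Tspan0 S : Tspan S 0.
Proof. by exists [::]; rewrite big_nil. Qed.

Lemma TspanD S x y : Tspan S x -> Tspan S y -> Tspan S (x + y).
Proof.
move=> [lx [Sx ->]] [ly [Sy ->]]; exists (lx ++ ly); rewrite big_cat.
by split=> // p; rewrite mem_cat => /orP[/Sx|/Sy].
Qed.

Lemma Tspan_sum (I : eqType) S (r : seq I) (G : I -> A) :
  (forall i, i \in r -> Tspan S (G i)) -> Tspan S (\sum_(i <- r) G i).
Proof.
elim: r => [|i r IH] SG; first by rewrite big_nil; exact: Tspan0.
rewrite big_cons; apply: TspanD; first exact/SG/mem_head.
by apply: IH => j rj; apply/SG; rewrite inE rj orbT.
Qed.

Lemma Tspan_mull S f x : Rt f -> Tspan S x -> Tspan S (f * x).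
Proof.
move=> Rf [l [Sl ->]]; rewrite mulr_sumr; apply: Tspan_sum => y /Sl[Ry Sy].
by rewrite mulrA; apply: Tspan_term => //; apply: Rt_mul.
Qed.

Lemma Tspan_mono S S' x : (forall w, S w -> S' w) -> Tspan S x -> Tspan S' x.
Proof. by move=> SS' [l [Sl ->]]; exists l; split=> // p /Sl[? /SS']. Qed.

Lemma Tspan_mulr S S' x y : Tspan S x ->
  (forall w, S w -> Tspan S' (prodT T w * y)) -> Tspan S' (x * y).
Proof.
move=> [l [Sl ->]] S'y; rewrite mulr_suml; apply: Tspan_sum => z /Sl[Rz Sz].
by rewrite -mulrA; apply: Tspan_mull => //; apply: S'y.
Qed.

End TSpan.

Lemma subseq_rcons_cases (I : eqType) (v p : seq I) k : subseq v (rcons p k) ->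
  subseq v p \/ exists2 v0, v = rcons v0 k & subseq v0 p.
Proof.
rewrite -subseq_rev rev_rcons; case/lastP: v => [|v0 x]; first by rewrite sub0seq; left.
rewrite rev_rcons /=; case: eqP => [-> sub_v0|_ sub_v]; last first.
  by left; rewrite -subseq_rev rev_rcons.
by right; exists v0; rewrite // -subseq_rev.
Qed.

Section HeckeRelations.
Variables (R : idomainType) (m r : nat) (q : R) (u : 'I_r -> R) (F : 'I_r -> {poly R}).
Variables (A : algType R) (t : 'I_m.+1 -> A) (T : 'I_m -> A).
Hypothesis q_unit : q \is a GRing.unit.
Hypothesis relations : Hnr_relations q u F t T.
Local Notation Rt := (in_Rt t).
Local Notation Tspan := (Tspan t T).
Local Notation prodT := (prodT T).
Implicit Types (f : A) (k a : 'I_m) (s v w z : seq 'I_m).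

Lemma in_Rt_Xcorr i j : Rt (Xcorr q u F t i j).
Proof.
apply: in_RtZ; apply: in_Rt_sum => c1 _; apply: in_Rt_sum => c2 _; apply: in_RtZ.
by apply: Rt_mul; apply: in_Rt_horner; apply: Rt_gen.
Qed.

Lemma in_Rt_Bp i j : Rt (Bp q u t i j).
Proof.
apply: in_RtZ; apply: in_Rt_sum => kk _; apply: in_Rt_prod => i' _.
apply: in_Rt_prod => j' _; apply: in_RtZ.
by apply: in_RtB; [apply: Rt_gen | apply: Rt_scal].
Qed.

Lemma T_mul_Rt k f : Rt f -> exists f' d, [/\ Rt f', Rt d & T k * f = f' * T k + d].
Proof.
have [_ [_ [_ [_ [_ [Tt_comm Tt_twist]]]]]] := relations.
elim=> [c|i|x y _ [x' [dx [Rx' Rdx Tx]]] _ [y' [dy [Ry' Rdy Ty]]]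
            |x y Rx [x' [dx [Rx' Rdx Tx]]] Ry [y' [dy [Ry' Rdy Ty]]]].
- by exists c%:A, 0; rewrite addr0 mulr_algl mulr_algr; split; [exact: Rt_scal|exact: in_Rt0|].
- have [Tthi Ttlo] := Tt_twist k.
  case: (eqVneq i (ord_lo k)) => [->|nlo].
    exists (t (ord_hi k)), (- Xcorr q u F t (ord_lo k) (ord_hi k)).
    by split; [exact: Rt_gen|rewrite -scaleN1r; exact/in_RtZ/in_Rt_Xcorr|].
  case: (eqVneq i (ord_hi k)) => [->|nhi].
    by exists (t (ord_lo k)), (Xcorr q u F t (ord_lo k) (ord_hi k)); split;
      [exact: Rt_gen|exact: in_Rt_Xcorr|].
  by exists (t i), 0; rewrite addr0 Tt_comm //; split; [exact: Rt_gen|exact: in_Rt0|].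
- exists (x' + y'), (dx + dy); split; [exact: Rt_add|exact: Rt_add|].
  by rewrite mulrDr Tx Ty mulrDl addrACA.
- exists (x' * y'), (x' * dy + dx * y); split; [exact: Rt_mul| |].
    by apply: Rt_add; apply: Rt_mul.
  by rewrite mulrA Tx mulrDl -mulrA Ty mulrDr !mulrA addrA.
Qed.

Lemma T_quadratic k : T k * T k = (q - q^-1) *: T k + 1.
Proof.
have [quad _] := relations; apply/eqP; rewrite -subr_eq0 -(quad k).
rewrite mulrDr !mulrBl mulr_algr !mulr_algl scalerA divrr // scale1r scalerBl.
by rewrite !opprD opprK !addrA.
Qed.

Lemma prodT_cons k s : prodT (k :: s) = T k * prodT s.
Proof. by rewrite /prodT big_cons. Qed.

Lemma prodT_rcons s k : prodT (rcons s k) = prodT s * T k.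
Proof. by rewrite /prodT big_rcons. Qed.

Definition Tequiv z z' :=
  [/\ wordperm z = wordperm z', size z = size z' & prodT z = prodT z'].

Lemma Tequiv_sym z z' : Tequiv z z' -> Tequiv z' z.
Proof. by case. Qed.

Lemma Tequiv_trans z' z z'' : Tequiv z z' -> Tequiv z' z'' -> Tequiv z z''.
Proof. by rewrite /Tequiv => -[-> -> ->]. Qed.

Lemma Tequiv_rcons z z' k : Tequiv z z' -> Tequiv (rcons z k) (rcons z' k).
Proof.
by move=> [e1 e2 e3]; split; rewrite ?wordperm_rcons ?size_rcons ?prodT_rcons ?e1 ?e2 ?e3.
Qed.

Lemma Tequiv_reduced z z' : Tequiv z z' -> reduced z -> reduced z'.
Proof. by move=> [e1 e2 _] /reducedP; rewrite e1 e2 => /reducedP. Qed.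

Lemma Tequiv_far z k a : (k + 2 <= a \/ a + 2 <= k)%N ->
  Tequiv (rcons (rcons z k) a) (rcons (rcons z a) k).
Proof.
have [_ [_ [_ [T_comm _]]]] := relations.
move=> far; split; rewrite ?size_rcons // ?wordperm_rcons ?prodT_rcons.
  by rewrite -!mulgA sw_comm.
by rewrite -!mulrA T_comm.
Qed.

Lemma Tequiv_braid z k a : a = k.+1 :> nat ->
  Tequiv (rcons (rcons (rcons z k) a) k) (rcons (rcons (rcons z a) k) a).
Proof.
have [_ [_ [T_braid _]]] := relations.
move=> adj; split; rewrite ?size_rcons // ?wordperm_rcons ?prodT_rcons.
  by rewrite -!mulgA (mulgA (sw k)) (mulgA (sw a)) sw_braid.
by rewrite -!mulrA (mulrA (T k)) (mulrA (T a)) T_braid.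
Qed.

(* The exchange property, lifted to the [T k] through the braid relations. *)
Lemma prodT_exchange z k : reduced z -> descent (wordperm z) k ->
  exists z', Tequiv z (rcons z' k).
Proof.
elim: {z}(size z).+1 {-2}z (ltnSn (size z)) k => // n IH z lt_zn k red_z.
case/lastP: z => [|z0 a] in lt_zn red_z *; first by rewrite wordperm_nil (negbTE (descent1 _)).
move: lt_zn; rewrite size_rcons ltnS => lt_z0n.
have [red_z0 asc_z0] := (reduced_rconsE _ _).1 red_z.
rewrite wordperm_rcons => desc_k; have desc_a : descent (wordperm z0 * sw a) a.
  by rewrite descent_mulsw.
case: (eqVneq a k) => [<-|nak]; first by exists z0.
have [far|adj] : (k + 2 <= a \/ a + 2 <= k)%N \/ (a = k.+1 :> nat \/ k = a.+1 :> nat).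
  by move: nak; rewrite eq_ord; lia.
  have [z1 eq_z0] := IH z0 lt_z0n k red_z0 (ltac:(by rewrite -(descent_far _ far))).
  exists (rcons z1 a); apply: Tequiv_trans (Tequiv_rcons a eq_z0) _.
  exact: Tequiv_far.
have [desc_z0k desc_z1a] := descent_braid adj desc_k desc_a.
rewrite mulswK in desc_z0k desc_z1a.
have [z1 eq_z0] := IH z0 lt_z0n k red_z0 desc_z0k.
have [wp_z0 size_z0 _] := eq_z0; rewrite wordperm_rcons in wp_z0.
have red_z1 : reduced z1.
  by have [] := (reduced_rconsE _ _).1 (Tequiv_reduced eq_z0 red_z0).
have [z2 eq_z1] : exists z2, Tequiv z1 (rcons z2 a).
  apply: IH red_z1 _; first by move: lt_z0n; rewrite size_z0 size_rcons; lia.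
  by rewrite wp_z0 mulswK in desc_z1a.
exists (rcons (rcons z2 k) a); apply: Tequiv_trans (Tequiv_rcons a eq_z0) _.
apply: Tequiv_trans (Tequiv_rcons a (Tequiv_rcons k eq_z1)) _.
by case: adj => adj; [apply/Tequiv_sym|]; apply: Tequiv_braid.
Qed.

Lemma prodT_mulT w k : reduced w ->
  Tspan (fun w' => [/\ reduced w', (size w' <= (size w).+1)%N &
          wordperm w' = wordperm w \/ wordperm w' = (wordperm w * sw k)%g])
        (prodT w * T k).
Proof.
move=> red_w; case: (boolP (descent (wordperm w) k)) => [desc|asc].
  have [w' eq_w] := prodT_exchange red_w desc.
  have [red_w' _] := (reduced_rconsE _ _).1 (Tequiv_reduced eq_w red_w).
  have [wp_w size_w prod_w] := eq_w; rewrite wordperm_rcons size_rcons in wp_w size_w.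
  have -> : prodT w * T k = ((q - q^-1)%:A * prodT w) + 1 * prodT w'.
    rewrite {1}prod_w prodT_rcons -mulrA T_quadratic mulrDr mulr1 mul1r.
    by rewrite -scalerAr -prodT_rcons -prod_w mulr_algl.
  apply: TspanD; apply: Tspan_term; rewrite ?size_w ?wp_w ?mulswK.
  - exact: Rt_scal.
  - by split; [|lia|left].
  - exact: in_Rt1.
  - by split; [|lia|right].
rewrite -(mul1r (prodT w * T k)) -prodT_rcons; apply: Tspan_term; first exact: in_Rt1.
by split; [exact/reduced_rconsE | rewrite size_rcons | right; rewrite wordperm_rcons].
Qed.

Lemma Tspan_mulT_l k S S' x : (forall w, S w -> S' w /\ S' (k :: w)) ->
  Tspan S x -> Tspan S' (T k * x).
Proof.
move=> SS' [l [Sl ->]]; rewrite mulr_sumr; apply: Tspan_sum => p /Sl[Rp /SS'[S'p S'kp]].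
have [f' [d [Rf' Rd Tkp]]] := T_mul_Rt k Rp.
rewrite mulrA Tkp mulrDl -mulrA -prodT_cons.
by apply: TspanD; apply: Tspan_term.
Qed.

Lemma prodg_sub_prodT s :
  Tspan (fun v => subseq v s /\ (size v < size s)%N) (prodg q u t T s - prodT s).
Proof.
elim: s => [|k s IH]; first by rewrite /prodg /prodT !big_nil subrr; exact: Tspan0.
set B := Bp q u t (ord_lo k) (ord_hi k); set X := prodg q u t T s - prodT s.
have -> : prodg q u t T (k :: s) - prodT (k :: s) = T k * X + B * X + B * prodT s.
  rewrite /prodg big_cons -/(prodg q u t T s) -[prodg q u t T s](subrK (prodT s)) -/X.
  by rewrite /g -/B prodT_cons mulrDl !mulrDr addrAC addrK addrA.
have sub_cons v : subseq v s /\ (size v < size s)%N ->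
    subseq v (k :: s) /\ (size v < (size s).+1)%N.
  move=> [sub_v lt_v]; split; last by rewrite ltnS ltnW.
  exact: subseq_trans sub_v (subseq_cons _ _).
apply: TspanD; first apply: TspanD.
- apply: Tspan_mulT_l IH => v [sub_v lt_v]; split; first exact: sub_cons.
  by rewrite /= eqxx.
- by apply: Tspan_mull; [exact: in_Rt_Bp | exact: Tspan_mono IH].
- by apply: Tspan_term; [exact: in_Rt_Bp | split; [exact: subseq_cons|]].
Qed.

(* Subword property of the Bruhat order, realised in the Hecke algebra. *)
Lemma prodT_subword p v : reduced p -> subseq v p ->
  Tspan (fun w => [/\ reduced w, (size w <= size v)%N & bruhat_le (wordperm w) (wordperm p)])
        (prodT v).
Proof.
elim/last_ind: p v => [|p k IH] v red_pk.
  rewrite subseq0 => /eqP ->; rewrite -[prodT [::]]mul1r.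
  by apply: Tspan_term; [exact: in_Rt1 | split => //; left].
have [red_p asc_p] := (reduced_rconsE _ _).1 red_pk; rewrite wordperm_rcons.
have le_p_pk := bruhat_le_mulsw_asc asc_p.
case/subseq_rcons_cases => [sub_v|[v0 -> sub_v0]].
  apply: Tspan_mono (IH v red_p sub_v) => w [red_w size_w le_wp].
  by split => //; exact: bruhat_le_trans le_wp le_p_pk.
rewrite prodT_rcons; apply: Tspan_mulr (IH v0 red_p sub_v0) _ => w [red_w size_w le_wp].
apply: Tspan_mono (prodT_mulT k red_w) => w' [red_w' size_w' [->|->]].
- by split; [|rewrite size_rcons; lia|exact: bruhat_le_trans le_wp le_p_pk].
- by split; [|rewrite size_rcons; lia|exact: bruhat_le_mulsw].
Qed.

End HeckeRelations.

Theorem lemma3p8 (R : idomainType) (m r : nat) (hm : (1 <= m)%N) (hr : (1 <= r)%N)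
  (q : R) (u : 'I_r -> R)
  (hq : q \is a GRing.unit) (hDelta : Delta u \is a GRing.unit)
  (F : 'I_r -> {poly R})
  (hFsize : forall c, (size (F c) <= r)%N)
  (hFval : forall c c', (F c).[u c'] = (c == c')%:R * Delta u)
  (A : algType R) (t : 'I_m.+1 -> A) (T : 'I_m -> A)
  (hrel : Hnr_relations q u F t T) :
  forall s : seq 'I_m, reduced s ->
    exists l : seq (A * seq 'I_m),
      (forall x, x \in l ->
         [/\ in_Rt t x.1, reduced x.2 & bruhat_lt (wordperm x.2) (wordperm s)]) /\
      prodg q u t T s - prodT T s = \sum_(x <- l) x.1 * prodT T x.2.
Proof.
move=> s red_s.
have [l [Sl ->]] : Tspan t T (fun w => reduced w /\ bruhat_lt (wordperm w) (wordperm s))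
                              (prodg q u t T s - prodT T s).
  rewrite -(mulr1 (_ - _)); apply: Tspan_mulr (prodg_sub_prodT hrel s) _.
  move=> v [sub_v lt_v]; rewrite mulr1.
  apply: Tspan_mono (prodT_subword hq hrel red_s sub_v) => w [red_w le_w [wp_w|lt_w]] //.
  by move: lt_v; rewrite -(reduced_size red_w red_s wp_w); lia.
by exists l; split => // p /Sl[Rp []].
Qed.
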